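(* Let $q$ be a prime power and $m \ge 2$ an integer, and let $g = \gcd(q-1, m(m-1))$. For any partition $\lambda$ of $m$ such that $S_{\lambda,\mathbb{F}_q}$ is nonempty, $|D_{\lambda,\mathbb{F}_q}| \ge \frac{q-1}{g}$.
   Context: For a partition $\lambda = (\lambda_1,\dots,\lambda_k)$ of $m$ (positive integers summing to $m$), a monic $f \in \mathbb{F}_q[x]$ of degree $m$ has factorization type $\lambda$ if $f = \pi_1\cdots\pi_k$ with the $\pi_i$ distinct monic irreducible polynomials and $\deg \pi_i = \lambda_i$. $S_{\lambda,\mathbb{F}_q}$ is the set of monic squarefree polynomials in $\mathbb{F}_q[x]$ of factorization type $\lambda$, and $D_{\lambda,\mathbb{F}_q} = \{\operatorname{disc}(f) : f \in S_{\lambda,\mathbb{F}_q}\}$. For $f$ of degree $m\ge 2$ with leading coefficient $a_m$ and roots $\alpha_i$ in a splitting field, $\operatorname{disc}(f) = a_m^{2m-2}\prod_{i<j}(\alpha_i-\alpha_j)^2$. *)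

From HB Require Import structures.
From mathcomp Require Import all_boot all_order all_algebra all_field.
Set Implicit Arguments. Unset Strict Implicit. Unset Printing Implicit Defensive.
Import GRing.Theory.
Local Open Scope ring_scope.

Definition is_partition (m : nat) (lam : seq nat) : Prop :=
  [/\ all (fun n => 0 < n)%N lam, sorted geq lam & sumn lam = m].

(* f has factorization type lam: f = pi_1 ... pi_k with the pi_i distinct
   monic irreducible polynomials, deg pi_i = lam_i.  (Such f is automatically
   monic squarefree of degree sumn lam.)  This is membership in S_{lam,F}. *)
Definition in_S (F : fieldType) (lam : seq nat) (f : {poly F}) : Prop :=
  exists ps : seq {poly F},
    [/\ uniq ps,
        all (fun p : {poly F} => p \is monic) ps,
        (forall p, p \in ps -> irreducible_poly p),
        map (fun p : {poly F} => (size p).-1) ps = lam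
      & f = \prod_(p <- ps) p].

Definition is_disc (F : fieldType) (f : {poly F}) (d : F) : Prop :=
  exists (L : fieldExtType F) (r : seq L),
    map_poly (in_alg L) f = ((lead_coef f)%:A)%:P * \prod_(x <- r) ('X - x%:P)
    /\ d%:A = ((lead_coef f)%:A) ^+ (2 * (size f).-1 - 2)
              * \prod_(i < size r) \prod_(j < size r | (i < j)%N) (r`_i - r`_j) ^+ 2.

From HB Require Import structures.
From mathcomp Require Import all_boot all_order all_algebra all_field.
From mathcomp Require Import cyclic boolp.
Set Implicit Arguments. Unset Strict Implicit. Unset Printing Implicit Defensive.
Import GRing.Theory.
Local Open Scope ring_scope.

(* If f has factorization type lam, so does its dilation a^m f(x/a) for every
   a in F^*; its roots are the a alpha_i, so its discriminant is
   a^(m(m-1)) disc f.  Over a finite field f is squarefree, hence disc f is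
   nonzero, and it lies in F because the Galois group fixes it.  As F^* is
   cyclic of order q - 1, the m(m-1)-th powers in F^* take (q - 1)/g values. *)

Lemma prod_neq_ltn (R : comPzRingType) n (h : 'I_n -> 'I_n -> R) :
  \prod_(i < n) \prod_(j < n | i != j) h i j
  = \prod_(i < n) \prod_(j < n | (i < j)%N) (h i j * h j i).
Proof.
have split_neq i : \prod_(j < n | i != j) h i j
    = \prod_(j < n | (i < j)%N) h i j * \prod_(j < n | (j < i)%N) h i j.
  rewrite (bigID (fun j : 'I_n => (i < j)%N)) /=.
  by congr (_ * _); apply: eq_bigl => j; rewrite neq_ltn; case: ltngtP.
rewrite (eq_bigr _ (fun i _ => split_neq i)) big_split /=.
under [RHS]eq_bigr do rewrite big_split.
by rewrite big_split /= [X in _ * X](exchange_big_dep xpredT).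
Qed.

Definition disc_roots (R : comPzRingType) (r : seq R) : R :=
  \prod_(i < size r) \prod_(j < size r | (i < j)%N) (r`_i - r`_j) ^+ 2.

Lemma prod_neq_diff (R : comPzRingType) (r : seq R) :
  \prod_(i < size r) \prod_(j < size r | i != j) (r`_i - r`_j)
  = \prod_(i < size r) \prod_(j < size r | (i < j)%N) (-1) * disc_roots r.
Proof.
rewrite prod_neq_ltn -big_split; apply: eq_bigr => i _.
rewrite -big_split; apply: eq_bigr => j _.
by rewrite /= -[r`_j - r`_i]opprB mulrN mulN1r expr2.
Qed.

Lemma disc_roots_neq0 (R : idomainType) (r : seq R) : uniq r -> disc_roots r != 0.
Proof.
move=> r_uniq; rewrite prodf_seq_neq0; apply/allP => i _; apply/implyP => _.
rewrite prodf_seq_neq0; apply/allP => j _; apply/implyP => lt_ij.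
by rewrite expf_neq0 // subr_eq0 nth_uniq // neq_ltn lt_ij.
Qed.

Lemma disc_roots_scale (R : comPzRingType) (a : R) (r : seq R) :
  disc_roots [seq a * x | x <- r] = a ^+ (size r * (size r).-1) * disc_roots r.
Proof.
rewrite /disc_roots size_map.
under eq_bigr do under eq_bigr do rewrite !(nth_map 0) // -mulrBr exprMn expr2.
under eq_bigr do rewrite big_split.
rewrite big_split /= -(prod_neq_ltn (fun _ _ => a)); congr (_ * _).
rewrite (eq_bigr (fun=> a ^+ (size r).-1)) => [|i _].
  by rewrite prodr_const card_ord -exprM mulnC.
rewrite (eq_bigl (fun j => j \in [set~ i])) => [|j]; last by rewrite !inE eq_sym.
by rewrite prodr_const cardsC1 card_ord.
Qed.

Lemma expf_pred_card (F : finFieldType) (x : F) : x != 0 -> x ^+ #|F|.-1 = 1.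
Proof.
move=> x_neq0; apply: (mulfI x_neq0).
by rewrite mulr1 -exprS prednK ?expf_card // (ltn_trans _ (finNzRing_gt1 F)).
Qed.

Lemma finField_prim_root (F : finFieldType) : {z : F | #|F|.-1.-primitive_root z}.
Proof.
have card_gt0 : (0 < #|F|.-1)%N by rewrite -subn1 subn_gt0 finNzRing_gt1.
set rs := enum [set~ (0 : F)].
have : has #|F|.-1.-primitive_root rs.
  apply: has_prim_root => //; last by rewrite -cardE cardsC1.
  - by apply/allP => x; rewrite mem_enum !inE unity_rootE => /expf_pred_card ->.
  - exact: enum_uniq.
by case/hasP/sig2_eqW => z _; exists z.
Qed.

Lemma prim_root_expr_inj (R : idomainType) n (w : R) :
  n.-primitive_root w -> injective (fun i : 'I_n => w ^+ i).
Proof.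
move=> w_prim i j /eqP.
by rewrite (eq_prim_root_expr w_prim) !modn_small // => /eqP /val_inj.
Qed.

Lemma card_finField_unit_powers (F : finFieldType) k :
  (#|F|.-1 %/ gcdn #|F|.-1 k <= #|[set a ^+ k | a in [set~ 0 : F]]%R|)%N.
Proof.
have [z z_prim] := finField_prim_root F.
have zk_prim := exp_prim_root z_prim k; rewrite gcdnC.
rewrite -[X in (X <= _)%N]card_ord -(card_imset _ (prim_root_expr_inj zk_prim)).
apply/subset_leq_card/subsetP => _ /imsetP[i _ ->].
apply/imsetP; exists (z ^+ i); last by rewrite -!exprM mulnC.
by rewrite !inE expf_neq0 // (prim_root_eq0 z_prim) -lt0n (prim_order_gt0 z_prim).
Qed.

Lemma coprimep_monic_irreducible (F : fieldType) (p q : {poly F}) :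
  p \is monic -> q \is monic -> irreducible_poly p -> irreducible_poly q ->
  p != q -> coprimep p q.
Proof.
move=> p_monic q_monic p_irr [_ q_irr] p_neq_q.
rewrite irreducible_poly_coprime //; apply: contra p_neq_q => /q_irr.
by case: p_irr => /gtn_eqF -> _ /(_ isT); rewrite eqp_monic.
Qed.

Lemma separable_big_prod (R : idomainType) (ps : seq {poly R}) :
  uniq ps -> {in ps &, forall p q, p != q -> coprimep p q} ->
  {in ps, forall p, separable_poly p} -> separable_poly (\prod_(p <- ps) p).
Proof.
elim: ps => [|p ps IH] /=; first by rewrite big_nil unlock /separable_poly coprime1p.
case/andP=> p_notin ps_uniq coprime_ps sep_ps; rewrite big_cons separable_mul.
rewrite sep_ps ?mem_head ?IH //; last 2 first.
- by move=> u v u_ps v_ps; apply: coprime_ps; rewrite inE ?u_ps ?v_ps orbT.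
- by move=> u u_ps; apply: sep_ps; rewrite inE u_ps orbT.
rewrite big_seq; apply: (big_ind (coprimep p)) => [|u v|u u_ps]; first exact: coprimep1.
  by rewrite coprimepMr => ->.
by apply: coprime_ps; rewrite ?inE ?eqxx ?u_ps ?orbT //; apply: contraNneq p_notin => ->.
Qed.

Lemma finField_irreducible_separable (F : finFieldType) (p : {poly F}) :
  irreducible_poly p -> separable_poly p.
Proof.
move=> p_irr; have [L [rs p_splits _]] := FinSplittingFieldFor (irredp_neq0 p_irr).
have [x x_rs] : exists x, x \in rs.
  case: rs p_splits => [|x rs] p_splits; last by exists x; rewrite mem_head.
  have := eqp_size p_splits; rewrite big_nil size_poly1 size_map_poly => p_size1.
  by case: p_irr; rewrite p_size1.
have [g Dg] := polyOver1P (minPolyOver 1 x).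
have g_dvd_p : g %| p.
  rewrite -(dvdp_map (in_alg L)) -Dg minPoly_dvdp ?alg_polyOver //.
  by rewrite (eqp_root p_splits) root_prod_XsubC.
have size_g_neq1 : size g != 1%N.
  by have := size_minPoly 1 x; rewrite Dg size_map_poly => ->.
have [_ /separableP sepL _] := and3P (finField_galois (sub1v (fullv : {subfield L}))).
rewrite -(eqp_separable (p_irr _ size_g_neq1 g_dvd_p)) -(separable_map (in_alg L)) -Dg.
exact: sepL (memvf x).
Qed.

Lemma galois_disc_roots_mem (F : fieldType) (L : splittingFieldType F)
    (f : {poly F}) (r : seq L) :
  galois 1 {:L} -> map_poly (in_alg L) f = \prod_(x <- r) ('X - x%:P) -> uniq r ->
  disc_roots r \in 1%VS.
Proof.
move=> galL f_splits r_uniq; rewrite -(galois_fixedField galL).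
apply/fixedFieldP => [|s _]; first exact: memvf.
have s_f : map_poly s (map_poly (in_alg L) f) = map_poly (in_alg L) f.
  by rewrite -map_poly_comp; apply: eq_map_poly => c /=; rewrite rmorph_alg.
have s_r i : (i < size r)%N -> s r`_i \in r.
  move=> lt_i_r; rewrite -root_prod_XsubC -f_splits -s_f.
  rewrite rootE horner_map (rootP _) ?rmorph0 // f_splits root_prod_XsubC.
  exact: mem_nth.
pose sg (i : 'I_(size r)) := Ordinal (etrans (index_mem _ _) (s_r i (ltn_ord i))).
have sgE i : r`_(sg i) = s r`_i by rewrite nth_index ?s_r.
have sg_inj : injective sg.
  move=> i j /(congr1 (fun k : 'I_(size r) => r`_k)); rewrite !sgE => /fmorph_inj.
  by move/eqP; rewrite nth_uniq // => /eqP /val_inj.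
(* The product over all ordered pairs is visibly invariant under the root
   permutation induced by s, and differs from disc_roots r by the sign c. *)
set c := \prod_(i < size r) \prod_(j < size r | (i < j)%N) (-1 : L).
have s_c : s c = c.
  rewrite rmorph_prod; apply: eq_bigr => i _.
  by rewrite rmorph_prod; apply: eq_bigr => j _; rewrite rmorphN1.
have c_neq0 : c != 0.
  rewrite prodf_seq_neq0; apply/allP => i _; apply/implyP => _.
  by rewrite prodf_seq_neq0; apply/allP => j _; rewrite oppr_eq0 oner_eq0 implybT.
apply: (mulfI c_neq0); rewrite -{1}s_c -rmorphM -prod_neq_diff rmorph_prod.
rewrite [RHS](reindex_inj sg_inj); apply: eq_bigr => i _.
rewrite rmorph_prod [RHS](reindex_inj sg_inj) /=.
rewrite [RHS](eq_bigl (fun j => i != j)) => [|j]; last by rewrite /= (inj_eq sg_inj).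
by apply: eq_bigr => j _; rewrite !sgE rmorphB.
Qed.

Definition dilatep (K : fieldType) (a : K) (p : {poly K}) : {poly K} :=
  a ^+ (size p).-1 *: (p \Po (a^-1 *: 'X)).

Section Dilate.
Variables (K : fieldType) (a : K).
Hypothesis a_neq0 : a != 0.
Implicit Types p q : {poly K}.

Let size_scaleX (b : K) : b != 0 -> size (b *: 'X : {poly K}) = 2%N.
Proof. by move=> b_neq0; rewrite size_scale // size_polyX. Qed.

Lemma size_dilatep p : size (dilatep a p) = size p.
Proof.
by rewrite size_scale ?expf_neq0 // size_comp_poly2 // size_scaleX ?invr_neq0.
Qed.

Lemma lead_coef_dilatep p : lead_coef (dilatep a p) = lead_coef p.
Proof.
rewrite lead_coefZ lead_coef_comp ?size_scaleX ?invr_neq0 //.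
by rewrite lead_coefZ lead_coefX mulr1 mulrCA -exprMn mulfV // expr1n mulr1.
Qed.

Lemma dilatep_monic p : p \is monic -> dilatep a p \is monic.
Proof. by rewrite !monicE lead_coef_dilatep. Qed.

Lemma dilatepM p q : p != 0 -> q != 0 -> dilatep a (p * q) = dilatep a p * dilatep a q.
Proof.
move=> p_neq0 q_neq0; rewrite /dilatep size_mul // comp_polyM.
rewrite -scalerAl -scalerAr scalerA -exprD; congr (_ ^+ _ *: _).
move: (size_poly_gt0 p) (size_poly_gt0 q); rewrite p_neq0 q_neq0.
by case: (size p) (size q) => [|i] [|j] //= _ _; rewrite addnS.
Qed.

Lemma dilatep_prod (I : eqType) (r : seq I) (F : I -> {poly K}) :
  {in r, forall i, F i != 0} ->
  dilatep a (\prod_(i <- r) F i) = \prod_(i <- r) dilatep a (F i).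
Proof.
elim: r => [|i r IH] F_neq0.
  by rewrite !big_nil /dilatep size_poly1 scale1r -polyC1 comp_polyC.
have F_r_neq0 : {in r, forall j, F j != 0}.
  by move=> j j_r; rewrite F_neq0 // inE j_r orbT.
rewrite !big_cons dilatepM ?F_neq0 ?mem_head ?IH //.
by rewrite prodf_seq_neq0; apply/allP => j /F_r_neq0 ->.
Qed.

Lemma dilatepK : cancel (dilatep a) (dilatep a^-1).
Proof.
move=> p; rewrite [dilatep a^-1 _]/dilatep size_dilatep /dilatep.
rewrite comp_polyZ -comp_polyA scalerA -exprMn mulVf // expr1n scale1r.
by rewrite invrK comp_polyZ comp_polyX scalerA mulVf // scale1r comp_polyXr.
Qed.

Lemma dilatep_dvdp p q : p %| q -> dilatep a p %| dilatep a q.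
Proof. by move=> p_dvd_q; rewrite dvdpZl ?dvdpZr ?expf_neq0 ?dvdp_comp_poly. Qed.

End Dilate.

Lemma dilatep_irreducible (K : fieldType) (a : K) (p : {poly K}) :
  a != 0 -> irreducible_poly p -> irreducible_poly (dilatep a p).
Proof.
move=> a_neq0 [p_gt1 p_irr]; split=> [|q size_q q_dvd]; first by rewrite size_dilatep.
have ai_neq0 : a^-1 != 0 by rewrite invr_neq0.
have /p_irr : dilatep a^-1 q %| p by rewrite -(dilatepK a_neq0 p) dilatep_dvdp.
rewrite size_dilatep // => /(_ size_q) /andP[q_dvd_p p_dvd_q].
by rewrite -[q](dilatepK ai_neq0) invrK /eqp !dilatep_dvdp.
Qed.

Lemma dilatep_prod_XsubC (L : fieldType) (b : L) (r : seq L) : b != 0 ->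
  dilatep b (\prod_(x <- r) ('X - x%:P)) = \prod_(x <- r) ('X - (b * x)%:P).
Proof.
move=> b_neq0; rewrite dilatep_prod => [|x _]; last by rewrite polyXsubC_eq0.
apply: eq_bigr => x _; rewrite /dilatep size_XsubC comp_polyB comp_polyX comp_polyC.
by rewrite scalerBr scalerA mulfV // scale1r scale_polyC.
Qed.

Lemma map_dilatep (K L : fieldType) (f : {rmorphism K -> L}) (a : K) (p : {poly K}) :
  map_poly f (dilatep a p) = dilatep (f a) (map_poly f p).
Proof.
by rewrite /dilatep map_polyZ map_comp_poly map_polyZ map_polyX rmorphXn fmorphV size_map_poly.
Qed.

Lemma size_prod_monic (F : fieldType) (ps : seq {poly F}) :
  all (fun p : {poly F} => p \is monic) ps ->
  size (\prod_(p <- ps) p) = (sumn (map (fun p : {poly F} => (size p).-1) ps)).+1.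
Proof.
elim: ps => [|p ps IH]; first by rewrite big_nil size_poly1.
case/andP=> p_monic ps_monic; rewrite big_cons size_Mmonic ?monic_neq0 ?IH //=.
  by rewrite addnS -[RHS]addSn prednK // size_poly_gt0 monic_neq0.
by rewrite big_seq monic_prod // => q /(allP ps_monic).
Qed.

Section FactorizationType.
Variables (F : fieldType) (lam : seq nat) (f : {poly F}).
Hypothesis f_S : in_S lam f.

Lemma in_S_monic : f \is monic.
Proof.
by case: f_S => ps [_ ps_monic _ _ ->]; rewrite big_seq monic_prod // => p /(allP ps_monic).
Qed.

Lemma size_in_S : size f = (sumn lam).+1.
Proof. by case: f_S => ps [_ ps_monic _ <- ->]; rewrite size_prod_monic. Qed.

Lemma in_S_dilatep (a : F) : a != 0 -> in_S lam (dilatep a f).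
Proof.
move=> a_neq0; case: f_S => ps [ps_uniq ps_monic ps_irr <- ->].
exists [seq dilatep a p | p <- ps]; split.
- by rewrite (map_inj_uniq (can_inj (dilatepK a_neq0))).
- by rewrite all_map; apply/allP => p p_ps /=; rewrite dilatep_monic ?(allP ps_monic).
- by move=> _ /mapP[p p_ps ->]; exact: dilatep_irreducible a_neq0 (ps_irr p p_ps).
- by rewrite -map_comp; apply: eq_map => p /=; rewrite size_dilatep.
rewrite big_map dilatep_prod // => p p_ps.
by rewrite monic_neq0 ?(allP ps_monic).
Qed.

End FactorizationType.

Lemma in_S_separable (F : finFieldType) lam (f : {poly F}) : in_S lam f -> separable_poly f.
Proof.
case=> ps [ps_uniq ps_monic ps_irr _ ->]; apply: separable_big_prod => // [p q p_ps q_ps|p p_ps].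
  by apply: coprimep_monic_irreducible; rewrite ?(allP ps_monic) //; apply: ps_irr.
exact/finField_irreducible_separable/ps_irr.
Qed.

Lemma is_disc_dilatep (F : fieldType) (L : fieldExtType F) (f : {poly F}) (r : seq L)
    (d a : F) :
  f \is monic -> map_poly (in_alg L) f = \prod_(x <- r) ('X - x%:P) ->
  d%:A = disc_roots r -> a != 0 ->
  is_disc (dilatep a f) (a ^+ (size r * (size r).-1) * d).
Proof.
move=> f_monic f_splits d_disc a_neq0.
have lead_f : lead_coef (dilatep a f) = 1.
  by rewrite (lead_coef_dilatep a_neq0) (monicP f_monic).
exists L, [seq a%:A * x | x <- r]; rewrite lead_f scale1r polyC1 mul1r expr1n mul1r; split.
  rewrite map_dilatep f_splits dilatep_prod_XsubC ?big_map //.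
  by rewrite fmorph_eq0.
rewrite -/(disc_roots [seq a%:A * x | x <- r]) disc_roots_scale -d_disc.
by rewrite -!in_algE rmorphM rmorphXn.
Qed.

Theorem lemma4p2 (F : finFieldType) (m : nat) (lam : seq nat) :
  (2 <= m)%N -> is_partition m lam -> (exists f : {poly F}, in_S lam f) ->
  exists D : {set F},
    (forall d : F, d \in D <-> exists f : {poly F}, in_S lam f /\ is_disc f d)
    /\ ((#|F| - 1) %/ gcdn (#|F| - 1) (m * (m - 1)) <= #|D|)%N.
Proof.
move=> _ [_ _ sum_lam] [f f_S].
pose D := [set d : F | `[< exists f : {poly F}, in_S lam f /\ is_disc f d >]].
exists D; split=> [d|]; first by rewrite inE; split=> /asboolP.
have f_monic := in_S_monic f_S.
have [L [r f_splits _]] := FinSplittingFieldFor (monic_neq0 f_monic).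
have {}f_splits : map_poly (in_alg L) f = \prod_(x <- r) ('X - x%:P).
  by apply/eqP; rewrite -eqp_monic ?monic_prod_XsubC ?map_monic.
have r_uniq : uniq r.
  by rewrite -separable_prod_XsubC -f_splits separable_map (in_S_separable f_S).
have size_r : size r = m.
  have := congr1 (fun p : {poly L} => size p) f_splits.
  by rewrite size_map_poly (size_in_S f_S) sum_lam size_prod_XsubC => -[].
have [d d_disc] : exists d : F, d%:A = disc_roots r.
  have galL := finField_galois (sub1v (fullv : {subfield L})).
  by have /vlineP[d ->] := galois_disc_roots_mem galL f_splits r_uniq; exists d.
have d_neq0 : d != 0.
  by apply: contraNneq (disc_roots_neq0 r_uniq) => d0; rewrite -d_disc d0 scale0r.
rewrite !subn1 -size_r; apply: leq_trans (card_finField_unit_powers F _) _.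
rewrite -[X in (X <= _)%N](card_imset _ (mulIf d_neq0)); apply/subset_leq_card/subsetP.
move=> _ /imsetP[_ /imsetP[a a_neq0 ->] ->]; rewrite !inE in a_neq0.
rewrite inE; apply/asboolP; exists (dilatep a f).
split; first exact: (in_S_dilatep f_S a_neq0).
exact: (is_disc_dilatep f_monic f_splits d_disc a_neq0).
Qed.
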